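(* Let $y$ be a $\lambda$-variable, $t$ a term, and $\sigma=[(x_i:=y)_{1\le i\le n};(a_j:=^*y)_{1\le j\le m}]$ for distinct $\lambda$-variables $x_1,\dots,x_n$ and distinct $\mu$-variables $a_1,\dots,a_m$. (1) If $(t\sigma\;y)$ is normalizable, then $t$ is normalizable. (2) If $t\sigma$ is normalizable, then $t$ is normalizable.
   Context: $\lambda\mu$-terms: $t::= x\mid \lambda x.t\mid (t\;t)\mid \mu a.t\mid (a\;t)$ over disjoint infinite sets of $\lambda$-variables and $\mu$-variables. Reduction $(\lambda x.u\;v)\triangleright u[x:=v]$, $(\mu a.u\;v)\triangleright\mu a.u[a:=^*v]$ ($u[a:=^*v]$ replaces each subterm $(a\;w)$ of $u$ by $(a\;(w\;v))$); a term is normalizable if it reduces (by the compatible closure of these rules) to a normal form. $t[(x_i:=y);(a_j:=^*y)]$ is obtained from $t$ by replacing each $x_i$ by $y$ and inductively each subterm $(a_j\;w)$ by $(a_j\;(w\;y))$. *)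

(* Lambda-mu calculus with de Bruijn indices.
   Two separate (disjoint) index spaces: lambda-variables and mu-variables.
   [Lam t] binds lambda-index 0 in t, [Mu t] binds mu-index 0 in t.
   Free variables are the indices that exceed the number of enclosing
   binders of the corresponding kind. *)
From Stdlib Require Import Arith Bool List Relations.
Import ListNotations.

Inductive term : Type :=
| Var   : nat -> term
| Lam   : term -> term
| App   : term -> term -> term
| Mu    : term -> term
| Named : nat -> term -> term.   (* (a t), a a mu-variable *)

Fixpoint lift_l (k : nat) (t : term) : term :=
  match t with
  | Var n => if k <=? n then Var (S n) else Var n
  | Lam u => Lam (lift_l (S k) u)
  | App u v => App (lift_l k u) (lift_l k v)
  | Mu u => Mu (lift_l k u)
  | Named b u => Named b (lift_l k u)
  end.

Fixpoint lift_m (k : nat) (t : term) : term :=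
  match t with
  | Var n => Var n
  | Lam u => Lam (lift_m k u)
  | App u v => App (lift_m k u) (lift_m k v)
  | Mu u => Mu (lift_m (S k) u)
  | Named b u => Named (if k <=? b then S b else b) (lift_m k u)
  end.

(* u[x_k := v], removing the binder of index k (beta-reduction) *)
Fixpoint subst_l (k : nat) (v : term) (t : term) : term :=
  match t with
  | Var n => if n =? k then v else if k <? n then Var (pred n) else Var n
  | Lam u => Lam (subst_l (S k) (lift_l 0 v) u)
  | App u w => App (subst_l k v u) (subst_l k v w)
  | Mu u => Mu (subst_l k (lift_m 0 v) u)
  | Named b u => Named b (subst_l k v u)
  end.

(* u[a_k :=* v] : each subterm (a_k w) becomes (a_k (w v)); binder kept *)
Fixpoint subst_m (k : nat) (v : term) (t : term) : term :=
  match t with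
  | Var n => Var n
  | Lam u => Lam (subst_m k (lift_l 0 v) u)
  | App u w => App (subst_m k v u) (subst_m k v w)
  | Mu u => Mu (subst_m (S k) (lift_m 0 v) u)
  | Named b u =>
      if b =? k then Named b (App (subst_m k v u) v)
      else Named b (subst_m k v u)
  end.

Inductive step : term -> term -> Prop :=
| step_beta : forall u v, step (App (Lam u) v) (subst_l 0 v u)
| step_mu   : forall u v, step (App (Mu u) v) (Mu (subst_m 0 (lift_m 0 v) u))
| step_lam  : forall u u', step u u' -> step (Lam u) (Lam u')
| step_appl : forall u u' v, step u u' -> step (App u v) (App u' v)
| step_appr : forall u v v', step v v' -> step (App u v) (App u v')
| step_mu_c : forall u u', step u u' -> step (Mu u) (Mu u')
| step_named: forall b u u', step u u' -> step (Named b u) (Named b u').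

Definition red : term -> term -> Prop := clos_refl_trans term step.

Definition normal (t : term) : Prop := forall t', ~ step t t'.

Definition normalizable (t : term) : Prop :=
  exists t', red t t' /\ normal t'.

(* The simultaneous substitution sigma = [(x_i := y)_i ; (a_j :=* y)_j]
   on free variables: xs = free lambda-variables x_i, as_ = free
   mu-variables a_j, y = free lambda-variable.  d / e = number of enclosing
   lambda / mu binders. *)
Fixpoint sigma_aux (xs as_ : list nat) (y : nat) (d e : nat) (t : term) : term :=
  match t with
  | Var n => if (d <=? n) && existsb (Nat.eqb (n - d)) xs
             then Var (y + d) else Var n
  | Lam u => Lam (sigma_aux xs as_ y (S d) e u)
  | App u w => App (sigma_aux xs as_ y d e u) (sigma_aux xs as_ y d e w)
  | Mu u => Mu (sigma_aux xs as_ y d (S e) u)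
  | Named b u =>
      if (e <=? b) && existsb (Nat.eqb (b - e)) as_
      then Named b (App (sigma_aux xs as_ y d e u) (Var (y + d)))
      else Named b (sigma_aux xs as_ y d e u)
  end.

Definition sigma (xs as_ : list nat) (y : nat) (t : term) : term :=
  sigma_aux xs as_ y 0 0 t.

(* The substitution sigma only renames lambda-variables and appends the argument
   y to the named subterms (a_j w).  We relate t to every term s obtained from t
   in this way, where moreover some of the administrative redexes (w y), with w
   an abstraction or a mu-abstraction, may already have been contracted.  This
   relation is closed under both substitutions of the calculus, and it is a
   backward simulation: each step of s is matched by at most one step of t
   (steps contracting an administrative redex are matched by none), and t is
   normal whenever s is.  Pulling a normalizing reduction of t sigma back along
   the simulation therefore normalizes t; for (t sigma y) the head argument y is
   one more administrative argument. *)
From Stdlib Require Import List Arith Lia Relations.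
Local Open Scope bool_scope.

Definition scons {A : Type} (a : A) (f : nat -> A) (n : nat) : A :=
  match n with 0 => a | S m => f m end.

Definition up_ren (f : nat -> nat) (n : nat) : nat :=
  match n with 0 => 0 | S m => S (f m) end.

Definition unshift (k n : nat) : nat := if k <? n then pred n else n.

Lemma unshift_SS (k n : nat) : unshift (S k) (S n) = S (unshift k n).
Proof.
  unfold unshift. destruct (Nat.ltb_spec k n), (Nat.ltb_spec (S k) (S n)); lia.
Qed.

Fixpoint ren_l (f : nat -> nat) (t : term) : term :=
  match t with
  | Var n => Var (f n)
  | Lam u => Lam (ren_l (up_ren f) u)
  | App u v => App (ren_l f u) (ren_l f v)
  | Mu u => Mu (ren_l f u)
  | Named b u => Named b (ren_l f u)
  end.

Fixpoint ren_m (h : nat -> nat) (t : term) : term :=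
  match t with
  | Var n => Var n
  | Lam u => Lam (ren_m h u)
  | App u v => App (ren_m h u) (ren_m h v)
  | Mu u => Mu (ren_m (up_ren h) u)
  | Named b u => Named (h b) (ren_m h u)
  end.

Lemma ren_l_ext (t : term) (f g : nat -> nat) :
  (forall n, f n = g n) -> ren_l f t = ren_l g t.
Proof.
  revert f g; induction t; intros f g H; simpl; f_equal; auto.
  apply IHt. intros [|n]; simpl; auto.
Qed.

Lemma ren_m_ext (t : term) (f g : nat -> nat) :
  (forall n, f n = g n) -> ren_m f t = ren_m g t.
Proof.
  revert f g; induction t; intros f g H; simpl; f_equal; auto.
  apply IHt. intros [|n]; simpl; auto.
Qed.

Lemma ren_l_id (t : term) : ren_l (fun n => n) t = t.
Proof.
  induction t; simpl; f_equal; auto.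
  rewrite <- IHt at 2. apply ren_l_ext. intros [|n]; reflexivity.
Qed.

Lemma lift_l_ren (k : nat) (t : term) :
  lift_l k t = ren_l (fun n => if k <=? n then S n else n) t.
Proof.
  revert k; induction t; intros k; simpl; try (f_equal; auto; fail).
  - destruct (k <=? n); reflexivity.
  - f_equal. rewrite IHt. apply ren_l_ext. intros [|n]; simpl; auto.
    destruct (k <=? n); reflexivity.
Qed.

Lemma lift_m_ren (k : nat) (t : term) :
  lift_m k t = ren_m (fun n => if k <=? n then S n else n) t.
Proof.
  revert k; induction t; intros k; simpl; try (f_equal; auto; fail).
  f_equal. rewrite IHt. apply ren_m_ext. intros [|n]; simpl; auto.
  destruct (k <=? n); reflexivity.
Qed.

Lemma subst_l_Var_neq (k n : nat) (v : term) :
  n <> k -> subst_l k v (Var n) = Var (unshift k n).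
Proof.
  intros Hn. simpl. apply Nat.eqb_neq in Hn. rewrite Hn. unfold unshift.
  destruct (k <? n); reflexivity.
Qed.

Lemma subst_l_Var_ren (k m : nat) (t : term) :
  subst_l k (Var m) t = ren_l (fun n => if n =? k then m else unshift k n) t.
Proof.
  revert k m; induction t; intros k m; simpl; f_equal; auto.
  - unfold unshift. destruct (n =? k), (k <? n); reflexivity.
  - rewrite IHt. apply ren_l_ext. intros [|n]; simpl; auto.
    rewrite unshift_SS. destruct (n =? k); reflexivity.
Qed.

(* [SigmaRel r k Q Y t s]: s is t with its lambda-variables renamed by r, its
   mu-variables renamed by k, and every subterm (b w) with [Q b = true] given the
   extra argument Y, as in (b (w Y)); the last two constructors allow this
   administrative redex to be contracted already when w is a Lam or a Mu. *)
Inductive SigmaRel :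
  (nat -> nat) -> (nat -> nat) -> (nat -> bool) -> nat -> term -> term -> Prop :=
| sr_var r k Q Y n : SigmaRel r k Q Y (Var n) (Var (r n))
| sr_lam r k Q Y t s :
    SigmaRel (up_ren r) k Q (S Y) t s -> SigmaRel r k Q Y (Lam t) (Lam s)
| sr_app r k Q Y t1 t2 s1 s2 :
    SigmaRel r k Q Y t1 s1 -> SigmaRel r k Q Y t2 s2 ->
    SigmaRel r k Q Y (App t1 t2) (App s1 s2)
| sr_mu r k Q Y t s :
    SigmaRel r (up_ren k) (scons false Q) Y t s -> SigmaRel r k Q Y (Mu t) (Mu s)
| sr_named r k Q Y b t s :
    Q b = false -> SigmaRel r k Q Y t s ->
    SigmaRel r k Q Y (Named b t) (Named (k b) s)
| sr_named_arg r k Q Y b t s :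
    Q b = true -> SigmaRel r k Q Y t s ->
    SigmaRel r k Q Y (Named b t) (Named (k b) (App s (Var Y)))
| sr_named_beta r k Q Y b t s :
    Q b = true -> SigmaRel (scons Y r) k Q Y t s ->
    SigmaRel r k Q Y (Named b (Lam t)) (Named (k b) s)
| sr_named_mu r k Q Y b t s :
    Q b = true -> SigmaRel r (up_ren k) (scons true Q) Y t s ->
    SigmaRel r k Q Y (Named b (Mu t)) (Named (k b) (Mu s)).

Lemma SigmaRel_ren_l r k Q Y t s : SigmaRel r k Q Y t s ->
  forall f g r' Y', (forall n, g (r n) = r' (f n)) -> g Y = Y' ->
  SigmaRel r' k Q Y' (ren_l f t) (ren_l g s).
Proof.
  induction 1; intros f g r' Y' Hr HY; simpl.
  - rewrite Hr. constructor.
  - constructor. apply IHSigmaRel; [intros [|n]; simpl; rewrite ?Hr|simpl; rewrite HY]; reflexivity.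
  - constructor; auto.
  - constructor; auto.
  - constructor; auto.
  - rewrite HY. apply sr_named_arg; auto.
  - apply sr_named_beta; auto. apply IHSigmaRel; auto. intros [|n]; simpl; auto.
  - apply sr_named_mu; auto.
Qed.

Lemma SigmaRel_ren_m r k Q Y t s : SigmaRel r k Q Y t s ->
  forall h1 h2 k' Q', (forall b, h2 (k b) = k' (h1 b)) -> (forall b, Q' (h1 b) = Q b) ->
  SigmaRel r k' Q' Y (ren_m h1 t) (ren_m h2 s).
Proof.
  induction 1; intros h1 h2 k' Q' Hk HQ; simpl; try rewrite Hk.
  - constructor.
  - constructor; auto.
  - constructor; auto.
  - constructor. apply IHSigmaRel; intros [|b]; simpl; auto; rewrite Hk; auto.
  - apply sr_named; [rewrite HQ|]; auto.
  - apply sr_named_arg; [rewrite HQ|]; auto.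
  - apply sr_named_beta; [rewrite HQ|]; auto.
  - apply sr_named_mu; [rewrite HQ|].
    + assumption.
    + apply IHSigmaRel; intros [|b']; simpl; auto; rewrite Hk; auto.
Qed.

Lemma SigmaRel_lift_l r k Q Y v w : SigmaRel r k Q Y v w ->
  SigmaRel (up_ren r) k Q (S Y) (lift_l 0 v) (lift_l 0 w).
Proof.
  intros H. rewrite !lift_l_ren. eapply SigmaRel_ren_l; eauto.
Qed.

Lemma SigmaRel_lift_l_left r k Q Y v w : SigmaRel r k Q Y v w ->
  SigmaRel (scons Y r) k Q Y (lift_l 0 v) w.
Proof.
  intros H. rewrite lift_l_ren, <- (ren_l_id w). eapply SigmaRel_ren_l; eauto.
Qed.

Lemma SigmaRel_lift_m r k Q Y v w q : SigmaRel r k Q Y v w ->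
  SigmaRel r (up_ren k) (scons q Q) Y (lift_m 0 v) (lift_m 0 w).
Proof.
  intros H. rewrite !lift_m_ren. eapply SigmaRel_ren_m; eauto.
Qed.

Lemma up_ren_inj_at (k : nat -> nat) (c c' : nat) :
  (forall b, k b = c' <-> b = c) -> forall b, up_ren k b = S c' <-> b = S c.
Proof.
  intros Hk [|b]; simpl; split; intro H; try discriminate;
    f_equal; apply Hk; congruence.
Qed.

Lemma SigmaRel_subst_l r1 k Q Y1 u s : SigmaRel r1 k Q Y1 u s ->
  forall kt ks r Y v w, r1 kt = ks ->
  (forall n, n <> kt -> r1 n <> ks /\ r (unshift kt n) = unshift ks (r1 n)) ->
  Y1 <> ks -> Y = unshift ks Y1 -> SigmaRel r k Q Y v w ->
  SigmaRel r k Q Y (subst_l kt v u) (subst_l ks w s).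
Proof.
  induction 1; intros kt ks r' Y' v w Hk Hn HY HY' Hvw.
  - destruct (Nat.eqb_spec n kt) as [->|Hne].
    + subst ks. simpl. rewrite !Nat.eqb_refl. assumption.
    + destruct (Hn n Hne) as [H1 H2].
      rewrite !subst_l_Var_neq by assumption. rewrite <- H2. constructor.
  - simpl. constructor. apply IHSigmaRel; auto.
    + simpl. congruence.
    + intros [|m] Hm; simpl; [auto|].
      destruct (Hn m) as [H1 H2]; [lia|]. rewrite !unshift_SS. simpl. split; congruence.
    + rewrite unshift_SS. congruence.
    + apply SigmaRel_lift_l; assumption.
  - simpl. constructor; eauto.
  - simpl. constructor. apply IHSigmaRel; auto. apply SigmaRel_lift_m; assumption.
  - simpl. apply sr_named; auto.
  - simpl. fold (subst_l ks w (Var Y)). rewrite subst_l_Var_neq, <- HY' by assumption.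
    apply sr_named_arg; eauto.
  - simpl. apply sr_named_beta; auto. apply IHSigmaRel; auto.
    + intros [|m] Hm; simpl; [auto|].
      destruct (Hn m) as [H1 H2]; [lia|]. rewrite unshift_SS. simpl. auto.
    + apply SigmaRel_lift_l_left; assumption.
  - simpl. apply sr_named_mu; auto. apply IHSigmaRel; auto.
    apply SigmaRel_lift_m; assumption.
Qed.

Lemma renamed_eqb (k : nat -> nat) (c c' b : nat) :
  (forall b, k b = c' <-> b = c) -> (k b =? c') = (b =? c).
Proof.
  intros Hk. destruct (Nat.eqb_spec b c) as [Hb|Hb]; apply Nat.eqb_eq + apply Nat.eqb_neq;
    rewrite Hk; assumption.
Qed.

Lemma SigmaRel_subst_m r k1 Q1 Y u s : SigmaRel r k1 Q1 Y u s ->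
  forall c c' v w, Q1 c = false -> (forall b, k1 b = c' <-> b = c) ->
  SigmaRel r k1 Q1 Y v w ->
  SigmaRel r k1 Q1 Y (subst_m c v u) (subst_m c' w s).
Proof.
  induction 1; intros c c' v w Hc Hk Hvw; simpl; try rewrite (renamed_eqb _ _ _ b Hk).
  - constructor.
  - constructor. apply IHSigmaRel; auto. apply SigmaRel_lift_l; assumption.
  - constructor; eauto.
  - constructor. apply IHSigmaRel; auto.
    + apply up_ren_inj_at; assumption.
    + apply SigmaRel_lift_m; assumption.
  - destruct (b =? c); apply sr_named; auto. constructor; auto.
  - replace (b =? c) with false by (symmetry; apply Nat.eqb_neq; congruence).
    apply sr_named_arg; auto.
  - replace (b =? c) with false by (symmetry; apply Nat.eqb_neq; congruence).
    apply sr_named_beta; auto. apply IHSigmaRel; auto.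
    apply SigmaRel_lift_l_left; assumption.
  - replace (b =? c) with false by (symmetry; apply Nat.eqb_neq; congruence).
    apply sr_named_mu; auto. apply IHSigmaRel; auto.
    + apply up_ren_inj_at; assumption.
    + apply SigmaRel_lift_m; assumption.
Qed.

(* Substituting [c' :=* Y] on the right switches the name c on in Q. *)
Lemma SigmaRel_subst_m_arg r k Q Y t s : SigmaRel r k Q Y t s ->
  forall c c' Q', Q c = false -> (forall b, k b = c' <-> b = c) ->
  (forall b, Q' b = if b =? c then true else Q b) ->
  SigmaRel r k Q' Y t (subst_m c' (Var Y) s).
Proof.
  induction 1; intros c c' Q' Hc Hk HQ; simpl; try rewrite (renamed_eqb _ _ _ b Hk).
  - constructor.
  - constructor. apply IHSigmaRel with c; auto.
  - constructor; eauto.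
  - constructor. apply IHSigmaRel with (S c); auto.
    + apply up_ren_inj_at; assumption.
    + intros [|b]; simpl; auto.
  - destruct (Nat.eqb_spec b c) as [->|Hb].
    + apply sr_named_arg; eauto. rewrite HQ, Nat.eqb_refl. reflexivity.
    + apply sr_named; eauto. rewrite HQ. apply Nat.eqb_neq in Hb. rewrite Hb. assumption.
  - assert (Hb : (b =? c) = false) by (apply Nat.eqb_neq; congruence).
    rewrite Hb. apply sr_named_arg; eauto. rewrite HQ, Hb. assumption.
  - assert (Hb : (b =? c) = false) by (apply Nat.eqb_neq; congruence).
    rewrite Hb. apply sr_named_beta; eauto. rewrite HQ, Hb. assumption.
  - assert (Hb : (b =? c) = false) by (apply Nat.eqb_neq; congruence).
    rewrite Hb. apply sr_named_mu; [rewrite HQ, Hb; assumption|].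
    apply IHSigmaRel with (S c); auto.
    + apply up_ren_inj_at; assumption.
    + intros [|b']; simpl; auto.
Qed.

Lemma SigmaRel_beta r k Q Y a b t2 s2 :
  SigmaRel (up_ren r) k Q (S Y) a b -> SigmaRel r k Q Y t2 s2 ->
  SigmaRel r k Q Y (subst_l 0 t2 a) (subst_l 0 s2 b).
Proof.
  intros Hab H2. eapply SigmaRel_subst_l; eauto.
  intros [|m] Hm; [lia|]. simpl. auto.
Qed.

Lemma SigmaRel_mu_app r k Q Y a b t2 s2 :
  SigmaRel r (up_ren k) (scons false Q) Y a b -> SigmaRel r k Q Y t2 s2 ->
  SigmaRel r k Q Y (Mu (subst_m 0 (lift_m 0 t2) a)) (Mu (subst_m 0 (lift_m 0 s2) b)).
Proof.
  intros Hab H2. constructor. apply SigmaRel_subst_m; auto.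
  - intros [|b']; simpl; split; intro; auto; discriminate.
  - apply SigmaRel_lift_m; assumption.
Qed.

Lemma SigmaRel_contract_lam r k Q Y a b :
  SigmaRel (up_ren r) k Q (S Y) a b ->
  SigmaRel (scons Y r) k Q Y a (subst_l 0 (Var Y) b).
Proof.
  intros H. rewrite subst_l_Var_ren, <- (ren_l_id a).
  eapply SigmaRel_ren_l; [eassumption| |]; [intros [|n]|]; reflexivity.
Qed.

Lemma SigmaRel_contract_mu r k Q Y a b :
  SigmaRel r (up_ren k) (scons false Q) Y a b ->
  SigmaRel r (up_ren k) (scons true Q) Y a (subst_m 0 (Var Y) b).
Proof.
  intros H. eapply SigmaRel_subst_m_arg with (c := 0); eauto.
  - intros [|b']; simpl; split; intro; auto; discriminate.
  - intros [|b']; reflexivity.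
Qed.

Lemma red_map (f : term -> term) :
  (forall u u', step u u' -> step (f u) (f u')) ->
  forall u u', red u u' -> red (f u) (f u').
Proof.
  intros Hf u u' H. induction H.
  - apply rt_step. auto.
  - apply rt_refl.
  - eapply rt_trans; eauto.
Qed.

Lemma SigmaRel_Lam_r r k Q Y t b : SigmaRel r k Q Y t (Lam b) ->
  exists a, t = Lam a /\ SigmaRel (up_ren r) k Q (S Y) a b.
Proof. intros H. inversion H; subst; eauto. Qed.

Lemma SigmaRel_Mu_r r k Q Y t b : SigmaRel r k Q Y t (Mu b) ->
  exists a, t = Mu a /\ SigmaRel r (up_ren k) (scons false Q) Y a b.
Proof. intros H. inversion H; subst; eauto. Qed.

Ltac step_back_ih :=
  match goal with
  | IH : forall s', step ?s s' -> _, Hst : step ?s _ |- _ =>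
      destruct (IH _ Hst) as [t' [Ht' Hrel]]
  end.

Ltac SigmaRel_head_inv :=
  match goal with
  | H : SigmaRel _ _ _ _ _ (Lam _) |- _ =>
      destruct (SigmaRel_Lam_r _ _ _ _ _ _ H) as [a [-> Ha]]
  | H : SigmaRel _ _ _ _ _ (Mu _) |- _ =>
      destruct (SigmaRel_Mu_r _ _ _ _ _ _ H) as [a [-> Ha]]
  end.

Lemma SigmaRel_step_back r k Q Y t s s' :
  SigmaRel r k Q Y t s -> step s s' -> exists t', red t t' /\ SigmaRel r k Q Y t' s'.
Proof.
  intros H; revert s'; induction H; intros s' Hs; inversion Hs; subst; try step_back_ih.
  - exists (Lam t'). split; [exact (red_map Lam step_lam _ _ Ht')|constructor; auto].
  - SigmaRel_head_inv. exists (subst_l 0 t2 a). split; [apply rt_step; constructor|].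
    apply SigmaRel_beta; assumption.
  - SigmaRel_head_inv. eexists. split; [apply rt_step; constructor|]. apply SigmaRel_mu_app; assumption.
  - exists (App t' t2). split; [|constructor; auto].
    exact (red_map (fun u => App u t2) (fun u u' H => step_appl u u' t2 H) _ _ Ht').
  - exists (App t1 t'). split; [|constructor; auto].
    exact (red_map (App t1) (step_appr t1) _ _ Ht').
  - exists (Mu t'). split; [exact (red_map Mu step_mu_c _ _ Ht')|constructor; auto].
  - exists (Named b t'). split; [exact (red_map (Named b) (step_named b) _ _ Ht')|].
    apply sr_named; auto.
  - match goal with Hst : step (App _ _) _ |- _ => inversion Hst; subst end.
    + SigmaRel_head_inv. exists (Named b (Lam a)). split; [apply rt_refl|].
      apply sr_named_beta; auto. apply SigmaRel_contract_lam; assumption.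
    + SigmaRel_head_inv. exists (Named b (Mu a)). split; [apply rt_refl|].
      apply sr_named_mu; auto. apply SigmaRel_contract_mu; assumption.
    + step_back_ih. exists (Named b t'). split; [exact (red_map (Named b) (step_named b) _ _ Ht')|].
      apply sr_named_arg; auto.
    + match goal with Hv : step (Var _) _ |- _ => inversion Hv end.
  - exists (Named b (Lam t')). split; [|apply sr_named_beta; auto].
    exact (red_map (fun u => Named b (Lam u))
             (fun u u' H => step_named b _ _ (step_lam u u' H)) _ _ Ht').
  - match goal with Hst : step (Mu _) _ |- _ => inversion Hst; subst end.
    step_back_ih. exists (Named b (Mu t')). split; [|apply sr_named_mu; auto].
    exact (red_map (fun u => Named b (Mu u))
             (fun u u' H => step_named b _ _ (step_mu_c u u' H)) _ _ Ht').
Qed.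

Ltac invert_head_step :=
  repeat match goal with
  | H : step (Lam _) _ |- _ => inversion H; subst; clear H
  | H : step (Mu _) _ |- _ => inversion H; subst; clear H
  | H : SigmaRel _ _ _ _ (Lam _) _ |- _ => inversion H; subst; clear H
  | H : SigmaRel _ _ _ _ (Mu _) _ |- _ => inversion H; subst; clear H
  end.

Lemma SigmaRel_reducible r k Q Y t s t' :
  SigmaRel r k Q Y t s -> step t t' -> exists s', step s s'.
Proof.
  intros H; revert t'; induction H; intros t' Ht; inversion Ht; subst; invert_head_step;
    try match goal with
    | IH : forall t', step ?t t' -> _, Hst : step ?t _ |- _ => destruct (IH _ Hst)
    end;
    eauto using step.
Qed.

(* [HeadRel] relates t to s Y the way [SigmaRel] relates (b t) to (b (s Y)) for Q b. *)
Inductive HeadRel r k Q Y : term -> term -> Prop :=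
| hr_arg t s : SigmaRel r k Q Y t s -> HeadRel r k Q Y t (App s (Var Y))
| hr_beta t s : SigmaRel (scons Y r) k Q Y t s -> HeadRel r k Q Y (Lam t) s
| hr_mu t s :
    SigmaRel r (up_ren k) (scons true Q) Y t s -> HeadRel r k Q Y (Mu t) (Mu s).

Lemma HeadRel_step_back r k Q Y t s s' :
  HeadRel r k Q Y t s -> step s s' -> exists t', red t t' /\ HeadRel r k Q Y t' s'.
Proof.
  intros H Hs. destruct H as [t s H|t s H|t s H].
  - inversion Hs; subst.
    + SigmaRel_head_inv. exists (Lam a). split; [apply rt_refl|].
      apply hr_beta, SigmaRel_contract_lam; assumption.
    + SigmaRel_head_inv. exists (Mu a). split; [apply rt_refl|].
      apply hr_mu, SigmaRel_contract_mu; assumption.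
    + match goal with Hst : step s _ |- _ =>
        destruct (SigmaRel_step_back _ _ _ _ _ _ _ H Hst) as [t' [Ht' Hrel]] end.
      exists t'. split; [assumption|]. apply hr_arg; assumption.
    + match goal with Hv : step (Var _) _ |- _ => inversion Hv end.
  - destruct (SigmaRel_step_back _ _ _ _ _ _ _ H Hs) as [t' [Ht' Hrel]].
    exists (Lam t'). split; [exact (red_map Lam step_lam _ _ Ht')|].
    apply hr_beta; assumption.
  - inversion Hs; subst.
    match goal with Hst : step s _ |- _ =>
      destruct (SigmaRel_step_back _ _ _ _ _ _ _ H Hst) as [t' [Ht' Hrel]] end.
    exists (Mu t'). split; [exact (red_map Mu step_mu_c _ _ Ht')|].
    apply hr_mu; assumption.
Qed.

Lemma HeadRel_reducible r k Q Y t s t' :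
  HeadRel r k Q Y t s -> step t t' -> exists s', step s s'.
Proof.
  intros H Ht. destruct H as [t s H|t s H|t s H]; invert_head_step;
    match goal with
    | Hst : step _ _ |- _ => destruct (SigmaRel_reducible _ _ _ _ _ _ _ H Hst)
    end;
    eauto using step.
Qed.

Section BackwardSimulation.

Variable P : term -> term -> Prop.
Hypothesis P_step_back :
  forall t s s', P t s -> step s s' -> exists t', red t t' /\ P t' s'.
Hypothesis P_reducible : forall t s t', P t s -> step t t' -> exists s', step s s'.

Lemma red_back s s' : red s s' -> forall t, P t s -> exists t', red t t' /\ P t' s'.
Proof.
  intros Hr. apply clos_rt_rt1n in Hr. induction Hr as [|s s1 s' Hs _ IH]; intros t Ht.
  - exists t. split; [apply rt_refl|assumption].
  - destruct (P_step_back _ _ _ Ht Hs) as [t1 [Ht1 H1]].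
    destruct (IH _ H1) as [t2 [Ht2 H2]].
    exists t2. split; [eapply rt_trans; eassumption|assumption].
Qed.

Lemma normalizable_back t s : P t s -> normalizable s -> normalizable t.
Proof.
  intros Hts [s' [Hs' Hnf]]. destruct (red_back _ _ Hs' _ Hts) as [t' [Ht' H']].
  exists t'. split; [assumption|]. intros t'' Hstep.
  destruct (P_reducible _ _ _ H' Hstep) as [s'' Hs'']. exact (Hnf _ Hs'').
Qed.

End BackwardSimulation.

Lemma SigmaRel_sigma_aux xs as_ y t : forall d e r k Q,
  (forall n, r n = if (d <=? n) && existsb (Nat.eqb (n - d)) xs then y + d else n) ->
  (forall b, k b = b) ->
  (forall b, Q b = (e <=? b) && existsb (Nat.eqb (b - e)) as_) ->
  SigmaRel r k Q (y + d) t (sigma_aux xs as_ y d e t).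
Proof.
  induction t as [n|t IH|t1 IH1 t2 IH2|t IH|n t IH]; intros d e r k Q Hr Hk HQ; simpl.
  - replace (if (d <=? n) && existsb (Nat.eqb (n - d)) xs then Var (y + d) else Var n)
      with (Var (r n)).
    + constructor.
    + rewrite Hr. destruct (_ && _); reflexivity.
  - constructor. rewrite <- Nat.add_succ_r. apply IH; auto.
    intros [|n]; simpl; [reflexivity|]. rewrite Hr.
    destruct (_ && _); lia.
  - constructor; auto.
  - constructor. apply IH.
    + assumption.
    + intros [|b]; simpl; rewrite ?Hk; reflexivity.
    + intros [|b]; simpl; [reflexivity|apply HQ].
  - destruct ((e <=? n) && existsb (Nat.eqb (n - e)) as_) eqn:Hn;
      rewrite <- HQ in Hn; rewrite <- (Hk n) at 2.
    + apply sr_named_arg; auto.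
    + apply sr_named; auto.
Qed.

Theorem mainTheorem12 :
  forall (y : nat) (t : term) (xs as_ : list nat),
    NoDup xs -> NoDup as_ ->
    (normalizable (App (sigma xs as_ y t) (Var y)) -> normalizable t) /\
    (normalizable (sigma xs as_ y t) -> normalizable t).
Proof.
  intros y t xs as_ _ _.
  pose proof (SigmaRel_sigma_aux xs as_ y t 0 0 _ (fun b => b) _
                (fun n => eq_refl) (fun b => eq_refl) (fun b => eq_refl)) as Hrel.
  rewrite Nat.add_0_r in Hrel. unfold sigma. split.
  - exact (normalizable_back _ (HeadRel_step_back _ _ _ _) (HeadRel_reducible _ _ _ _)
             _ _ (hr_arg _ _ _ _ _ _ Hrel)).
  - exact (normalizable_back _ (SigmaRel_step_back _ _ _ _) (SigmaRel_reducible _ _ _ _)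
             _ _ Hrel).
Qed.
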